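(* Let $(M,g)$ be a $\mathcal{W}^{\star}$-symmetric space-time (i.e. $\nabla_m\mathcal{W}^{\star}_{ijkl}=0$) obeying Einstein's field equation for a purely electro-magnetic distribution, i.e. $R_{ij}=kT_{ij}$ with $k\neq0$ a constant and $T_{ij}$ a symmetric tensor with vanishing trace $g^{ij}T_{ij}=0$. Then the energy-momentum tensor is covariantly constant: $\nabla_m T_{jk}=0$.
   Context: A space-time is a $4$-dimensional Lorentzian manifold $(M,g)$ with Levi-Civita connection $\nabla$. $R_{ijkl}$ denotes the components of the Riemann curvature tensor, with index conventions such that the Ricci tensor is $R_{jk}=g^{il}R_{ijkl}$; $R=g^{jk}R_{jk}$ is the scalar curvature. The $\mathcal{W}^{\star}$-curvature tensor is $\mathcal{W}^{\star}_{ijkl}=R_{ijkl}-\tfrac{1}{3}\left[g_{jk}R_{il}-g_{jl}R_{ik}\right]$. *)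

From Stdlib Require Import Reals Lra List Arith ClassicalEpsilon.
Open Scope R_scope.

(* A point of a coordinate chart: only coordinates 0..3 are used. *)
Definition Pt := nat -> R.

Definition upd (x : Pt) (i : nat) (t : R) : Pt :=
  fun j => if Nat.eqb j i then t else x j.

(* partial derivative d f / d x^i at x (the limit, chosen by epsilon;
   meaningful wherever the derivative exists) *)
Definition pd (f : Pt -> R) (i : nat) (x : Pt) : R :=
  epsilon (inhabits 0)
    (fun l => derivable_pt_lim (fun t => f (upd x i t)) (x i) l).

Definition pds (l : list nat) (f : Pt -> R) : Pt -> R :=
  fold_right (fun i h => pd h i) f l.

Definition open4 (U : Pt -> Prop) : Prop :=
  forall x, U x -> exists eps, 0 < eps /\
    forall y, (forall i, (i < 4)%nat -> Rabs (y i - x i) < eps) -> U y.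

Definition smooth_on (U : Pt -> Prop) (f : Pt -> R) : Prop :=
  forall (l : list nat) (i : nat) (x : Pt),
    Forall (fun j => (j < 4)%nat) l -> (i < 4)%nat -> U x ->
    exists d, derivable_pt_lim (fun t => pds l f (upd x i t)) (x i) d.

Definition sum4 (f : nat -> R) : R := f 0%nat + f 1%nat + f 2%nat + f 3%nat.

Definition eta (a b : nat) : R :=
  if Nat.eqb a b then (if Nat.eqb a 0 then -1 else 1) else 0.

Definition lorentzian_on (U : Pt -> Prop) (g : nat -> nat -> Pt -> R) : Prop :=
  forall x, U x -> exists e : nat -> nat -> R,
    forall a b, (a < 4)%nat -> (b < 4)%nat ->
      sum4 (fun i => sum4 (fun j => g i j x * e a i * e b j)) = eta a b.

Section Geometry.
Variables (g gi : nat -> nat -> Pt -> R).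

Definition Gam (k i j : nat) (x : Pt) : R :=
  / 2 * sum4 (fun l => gi k l x *
      (pd (g j l) i x + pd (g i l) j x - pd (g i j) l x)).

Definition Rup (a b c d : nat) (x : Pt) : R :=
  pd (Gam a d b) c x - pd (Gam a c b) d x
  + sum4 (fun e => Gam a c e x * Gam e d b x - Gam a d e x * Gam e c b x).

(* R_{ijkl} = g(R(e_i,e_j)e_k, e_l); contraction g^{il} R_{ijkl} is Ricci *)
Definition Riem (i j k l : nat) (x : Pt) : R :=
  sum4 (fun a => g i a x * Rup a j l k x).

Definition Ric (j k : nat) (x : Pt) : R :=
  sum4 (fun i => sum4 (fun l => gi i l x * Riem i j k l x)).

Definition Rscal (x : Pt) : R :=
  sum4 (fun j => sum4 (fun k => gi j k x * Ric j k x)).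

Definition Wstar (i j k l : nat) (x : Pt) : R :=
  Riem i j k l x - / 3 * (g j k x * Ric i l x - g j l x * Ric i k x).

Definition cov2 (T : nat -> nat -> Pt -> R) (m j k : nat) (x : Pt) : R :=
  pd (T j k) m x
  - sum4 (fun a => Gam a m j x * T a k x + Gam a m k x * T j a x).

Definition cov4 (T : nat -> nat -> nat -> nat -> Pt -> R) (m i j k l : nat)
  (x : Pt) : R :=
  pd (T i j k l) m x
  - sum4 (fun a => Gam a m i x * T a j k l x + Gam a m j x * T i a k l x
                 + Gam a m k x * T i j a l x + Gam a m l x * T i j k a x).

End Geometry.

From Stdlib Require Import Reals List Arith ClassicalEpsilon Lra Lia.
From Stdlib Require Import FunctionalExtensionality PropExtensionality.
Open Scope R_scope.

(* Contracting W* with g^{il} gives g^{il} W*_{ijkl} = (4/3) R_{jk} - (1/3) R g_{jk}.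
   Since T is trace-free, R = k g^{ij} T_{ij} = 0, so this contraction is (4/3) k T_{jk}.
   The inverse metric is parallel, so covariant differentiation commutes with the
   contraction, and nabla_m T_{jk} is a contraction of nabla_m W*_{ijkl} = 0. *)

Lemma sum4_ext (F G : nat -> R) :
  (forall a, (a < 4)%nat -> F a = G a) -> sum4 F = sum4 G.
Proof. intros H; unfold sum4; rewrite !H by lia; reflexivity. Qed.

Lemma sum4_delta (F : nat -> R) j : (j < 4)%nat ->
  sum4 (fun i => F i * (if Nat.eqb i j then 1 else 0)) = F j.
Proof. intros Hj. destruct j as [|[|[|[|j]]]]; [..|lia]; unfold sum4; simpl; ring. Qed.

Lemma inverse_of_sym_sym (A B : nat -> nat -> R) :
  (forall a b, (a < 4)%nat -> (b < 4)%nat -> A a b = A b a) ->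
  (forall i k, (i < 4)%nat -> (k < 4)%nat ->
     sum4 (fun j => A i j * B j k) = if Nat.eqb i k then 1 else 0) ->
  forall a b, (a < 4)%nat -> (b < 4)%nat -> B a b = B b a.
Proof.
  intros HA HAB a b Ha Hb.
  assert (HBA : forall i k, (i < 4)%nat -> (k < 4)%nat ->
            sum4 (fun j => B j i * A j k) = if Nat.eqb i k then 1 else 0).
  { intros i k Hi Hk. rewrite Nat.eqb_sym, <- (HAB k i Hk Hi).
    apply sum4_ext; intros j Hj. rewrite (HA j k) by lia. ring. }
  symmetry.
  transitivity (sum4 (fun j => B j a * (if Nat.eqb j b then 1 else 0))).
  { symmetry. apply (sum4_delta (fun j => B j a)); auto. }
  transitivity (sum4 (fun j => B j a * sum4 (fun k => A j k * B k b))).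
  { apply sum4_ext; intros j Hj. rewrite HAB; auto. }
  transitivity (sum4 (fun k => sum4 (fun j => B j a * A j k) * B k b)).
  { unfold sum4; ring. }
  transitivity (sum4 (fun k => B k b * (if Nat.eqb k a then 1 else 0))).
  { apply sum4_ext; intros k Hk. rewrite HBA, Nat.eqb_sym by auto. ring. }
  apply (sum4_delta (fun k => B k b)); auto.
Qed.

Definition has_pd (f : Pt -> R) (i : nat) (x : Pt) : Prop :=
  exists d, derivable_pt_lim (fun t => f (upd x i t)) (x i) d.

Lemma upd_id (x : Pt) i : upd x i (x i) = x.
Proof.
  apply functional_extensionality; intro j; unfold upd.
  destruct (Nat.eqb_spec j i); subst; reflexivity.
Qed.

Lemma pd_unique f i x d :
  derivable_pt_lim (fun t => f (upd x i t)) (x i) d -> pd f i x = d.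
Proof.
  intro H. unfold pd.
  apply (uniqueness_limite _ _ _ _ (epsilon_spec (inhabits 0) _ (ex_intro _ d H)) H).
Qed.

Lemma pd_derivable f i x : has_pd f i x ->
  derivable_pt_lim (fun t => f (upd x i t)) (x i) (pd f i x).
Proof. intros [d Hd]. rewrite (pd_unique _ _ _ _ Hd). exact Hd. Qed.

Lemma has_pd_plus f h i x :
  has_pd f i x -> has_pd h i x -> has_pd (fun y => f y + h y) i x.
Proof.
  intros Hf Hh. eexists.
  exact (derivable_pt_lim_plus _ _ _ _ _ (pd_derivable _ _ _ Hf) (pd_derivable _ _ _ Hh)).
Qed.

Lemma pd_plus f h i x : has_pd f i x -> has_pd h i x ->
  pd (fun y => f y + h y) i x = pd f i x + pd h i x.
Proof.
  intros Hf Hh. apply pd_unique.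
  exact (derivable_pt_lim_plus _ _ _ _ _ (pd_derivable _ _ _ Hf) (pd_derivable _ _ _ Hh)).
Qed.

Lemma has_pd_mult f h i x :
  has_pd f i x -> has_pd h i x -> has_pd (fun y => f y * h y) i x.
Proof.
  intros Hf Hh. eexists.
  exact (derivable_pt_lim_mult _ _ _ _ _ (pd_derivable _ _ _ Hf) (pd_derivable _ _ _ Hh)).
Qed.

Lemma pd_mult f h i x : has_pd f i x -> has_pd h i x ->
  pd (fun y => f y * h y) i x = pd f i x * h x + f x * pd h i x.
Proof.
  intros Hf Hh. apply pd_unique.
  pose proof (derivable_pt_lim_mult _ _ _ _ _
                (pd_derivable _ _ _ Hf) (pd_derivable _ _ _ Hh)) as E.
  unfold mult_fct in E. rewrite upd_id in E. exact E.
Qed.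

Lemma pd_scal c f i x : has_pd f i x -> pd (fun y => c * f y) i x = c * pd f i x.
Proof.
  intros Hf. apply pd_unique.
  exact (derivable_pt_lim_scal _ c _ _ (pd_derivable _ _ _ Hf)).
Qed.

Lemma pd_const c i x : pd (fun _ => c) i x = 0.
Proof. apply pd_unique, derivable_pt_lim_const. Qed.

Lemma has_pd_sum4 (F : nat -> Pt -> R) i x :
  (forall a, (a < 4)%nat -> has_pd (F a) i x) ->
  has_pd (fun y => sum4 (fun a => F a y)) i x.
Proof. intros H. unfold sum4. repeat apply has_pd_plus; apply H; lia. Qed.

Lemma pd_sum4 (F : nat -> Pt -> R) i x :
  (forall a, (a < 4)%nat -> has_pd (F a) i x) ->
  pd (fun y => sum4 (fun a => F a y)) i x = sum4 (fun a => pd (F a) i x).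
Proof.
  intros H. unfold sum4.
  rewrite !pd_plus by (repeat apply has_pd_plus; apply H; lia).
  reflexivity.
Qed.
Section Chart.
Variable U : Pt -> Prop.
Hypothesis U_open : open4 U.

Definition eq_on (f h : Pt -> R) : Prop := forall y, U y -> f y = h y.

Lemma open4_line x i : U x -> (i < 4)%nat ->
  exists eps, 0 < eps /\ forall t, Rabs (t - x i) < eps -> U (upd x i t).
Proof.
  intros Hx Hi. destruct (U_open x Hx) as [eps [He H]].
  exists eps; split; auto. intros t Ht. apply H. intros j Hj.
  unfold upd. destruct (Nat.eqb_spec j i); subst; auto.
  rewrite Rminus_diag, Rabs_R0; auto.
Qed.

Lemma derivable_pt_lim_local f h x i d : eq_on f h -> U x -> (i < 4)%nat ->
  derivable_pt_lim (fun t => f (upd x i t)) (x i) d ->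
  derivable_pt_lim (fun t => h (upd x i t)) (x i) d.
Proof.
  intros Hfh Hx Hi Hd eps Heps.
  destruct (open4_line x i Hx Hi) as [e [He Hline]].
  destruct (Hd eps Heps) as [delta Hdelta].
  assert (Hmin : 0 < Rmin delta e) by (apply Rmin_pos; [apply cond_pos | auto]).
  exists (mkposreal _ Hmin). intros t Ht Hlt. simpl in Hlt.
  rewrite <- !Hfh.
  - apply Hdelta; auto. eapply Rlt_le_trans; [exact Hlt | apply Rmin_l].
  - apply Hline. rewrite Rminus_diag, Rabs_R0; auto.
  - apply Hline. replace (x i + t - x i) with t by ring.
    eapply Rlt_le_trans; [exact Hlt | apply Rmin_r].
Qed.

Lemma has_pd_local f h x i : eq_on f h -> U x -> (i < 4)%nat ->
  has_pd f i x -> has_pd h i x.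
Proof. intros H Hx Hi [d Hd]; exists d; eapply derivable_pt_lim_local; eauto. Qed.

Lemma pd_local f h x i : eq_on f h -> U x -> (i < 4)%nat -> pd f i x = pd h i x.
Proof.
  intros Hfh Hx Hi. unfold pd. f_equal.
  apply functional_extensionality; intro l; apply propositional_extensionality.
  split; apply derivable_pt_lim_local; auto.
  intros y Hy; symmetry; auto.
Qed.

Lemma pds_local f h l : eq_on f h -> Forall (fun j => (j < 4)%nat) l ->
  eq_on (pds l f) (pds l h).
Proof.
  intros H; induction l as [|a l IH]; intros Hl y Hy; simpl; auto.
  inversion Hl; subst. apply pd_local; auto.
Qed.

(* [smooth_on] stratified by the order of differentiation, so that closure
   under products can be proved by induction on that order. *)
Definition smooth_upto_on (n : nat) (f : Pt -> R) : Prop :=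
  forall l i x, (length l <= n)%nat -> Forall (fun j => (j < 4)%nat) l ->
    (i < 4)%nat -> U x -> has_pd (pds l f) i x.

Lemma smooth_on_upto f : smooth_on U f <-> forall n, smooth_upto_on n f.
Proof.
  split.
  - intros H n l i x _ Hl Hi Hx. apply H; auto.
  - intros H l i x Hl Hi Hx. apply (H (length l)); auto.
Qed.

Lemma pds_plus n f h : smooth_upto_on n f -> smooth_upto_on n h ->
  forall l, (length l <= S n)%nat -> Forall (fun j => (j < 4)%nat) l ->
  eq_on (pds l (fun y => f y + h y)) (fun y => pds l f y + pds l h y).
Proof.
  intros Hf Hh l; induction l as [|a l IH]; intros Hlen Hl y Hy; simpl; auto.
  inversion Hl; subst. simpl in Hlen.
  rewrite (pd_local _ (fun y => pds l f y + pds l h y)) by (auto; apply IH; auto; lia).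
  apply pd_plus; [apply Hf | apply Hh]; auto; lia.
Qed.

Lemma smooth_upto_on_plus n f h : smooth_upto_on n f -> smooth_upto_on n h ->
  smooth_upto_on n (fun y => f y + h y).
Proof.
  intros Hf Hh l i x Hlen Hl Hi Hx.
  apply has_pd_local with (fun y => pds l f y + pds l h y); auto.
  - intros y Hy. symmetry. apply pds_plus with n; auto.
  - apply has_pd_plus; auto.
Qed.

Lemma pds_rcons l i f : pds (l ++ i :: nil) f = pds l (pd f i).
Proof. unfold pds. rewrite fold_right_app. reflexivity. Qed.

Lemma smooth_on_pd f i : smooth_on U f -> (i < 4)%nat -> smooth_on U (pd f i).
Proof.
  intros H Hi l j x Hl Hj Hx. rewrite <- pds_rcons. apply H; auto.
  apply Forall_app; split; auto.
Qed.

Lemma smooth_on_has_pd f i x : smooth_on U f -> U x -> (i < 4)%nat -> has_pd f i x.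
Proof. intros H Hx Hi. apply (H nil); auto. Qed.

(* Leibniz rule: differentiating [f * h] once more yields the two products
   [pd f b * h] and [f * pd h b], which need one derivative less. *)
Lemma smooth_upto_on_mult n : forall f h, smooth_on U f -> smooth_on U h ->
  smooth_upto_on n (fun y => f y * h y).
Proof.
  induction n as [|n IH]; intros f h Hf Hh l i x Hlen Hl Hi Hx.
  - destruct l; simpl in Hlen; [|lia]. simpl.
    apply has_pd_mult; apply smooth_on_has_pd; auto.
  - destruct l as [|a0 l0].
    { simpl. apply has_pd_mult; apply smooth_on_has_pd; auto. }
    destruct (exists_last (l := a0 :: l0) ltac:(discriminate)) as [l [b Hlb]].
    rewrite Hlb in *. apply Forall_app in Hl. destruct Hl as [Hl Hb].
    inversion Hb; subst. rewrite length_app in Hlen; simpl in Hlen.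
    rewrite pds_rcons.
    set (P := fun y => pd f b y * h y).
    set (Q := fun y => f y * pd h b y).
    assert (HP : smooth_upto_on n P) by (apply IH; auto; apply smooth_on_pd; auto).
    assert (HQ : smooth_upto_on n Q) by (apply IH; auto; apply smooth_on_pd; auto).
    apply has_pd_local with (fun y => pds l P y + pds l Q y); auto.
    + intros y Hy.
      rewrite (pds_local (pd (fun y => f y * h y) b) (fun y => P y + Q y)); auto.
      * symmetry. apply (pds_plus n P Q HP HQ l); auto; lia.
      * intros z Hz. apply pd_mult; apply smooth_on_has_pd; auto.
    + apply has_pd_plus; [apply HP | apply HQ]; auto; lia.
Qed.

Lemma smooth_on_mult f h : smooth_on U f -> smooth_on U h ->
  smooth_on U (fun y => f y * h y).
Proof. intros. apply smooth_on_upto; intro n; apply smooth_upto_on_mult; auto. Qed.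

Lemma smooth_on_plus f h : smooth_on U f -> smooth_on U h ->
  smooth_on U (fun y => f y + h y).
Proof.
  rewrite !smooth_on_upto. intros Hf Hh n. apply smooth_upto_on_plus; auto.
Qed.

Lemma pds_const c l : exists c', pds l (fun _ => c) = fun _ => c'.
Proof.
  induction l as [|a l [c' IH]]; simpl; [exists c; auto|].
  exists 0. rewrite IH. apply functional_extensionality; intro; apply pd_const.
Qed.

Lemma smooth_on_const c : smooth_on U (fun _ => c).
Proof.
  intros l i x _ _ _. destruct (pds_const c l) as [c' ->].
  exists 0. apply derivable_pt_lim_const.
Qed.

Lemma smooth_on_minus f h : smooth_on U f -> smooth_on U h ->
  smooth_on U (fun y => f y - h y).
Proof.
  intros Hf Hh.
  replace (fun y => f y - h y) with (fun y => f y + (fun _ => -1) y * h y)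
    by (apply functional_extensionality; intro; ring).
  apply smooth_on_plus, smooth_on_mult; auto using smooth_on_const.
Qed.

Lemma smooth_on_sum4 (F : nat -> Pt -> R) :
  (forall a, (a < 4)%nat -> smooth_on U (F a)) ->
  smooth_on U (fun y => sum4 (fun a => F a y)).
Proof. intros H. unfold sum4. repeat apply smooth_on_plus; apply H; lia. Qed.

End Chart.

Ltac solve_smooth := repeat (first
  [ apply smooth_on_const
  | apply smooth_on_sum4; [assumption|]; intros ? ?
  | apply smooth_on_minus; [assumption| |]
  | apply smooth_on_plus; [assumption| |]
  | apply smooth_on_mult; [assumption| |]
  | apply smooth_on_pd; [|assumption]
  | solve [auto] ]).

Lemma christoffel_inverse_metric (h dg dgm : nat -> nat -> R) i l :
  (i < 4)%nat -> (l < 4)%nat ->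
  (forall a b, (a < 4)%nat -> (b < 4)%nat -> h a b = h b a) ->
  (forall a b, (a < 4)%nat -> (b < 4)%nat -> dg a b = dg b a) ->
  sum4 (fun a => (/ 2 * sum4 (fun b => h i b * (dg a b + dgm a b - dgm b a))) * h a l
               + (/ 2 * sum4 (fun b => h l b * (dg a b + dgm a b - dgm b a))) * h i a)
  = sum4 (fun a => h i a * sum4 (fun b => dg a b * h b l)).
Proof.
  intros Hi Hl Hh Hdg. unfold sum4.
  rewrite (Hh 0%nat l), (Hh 1%nat l), (Hh 2%nat l), (Hh 3%nat l) by lia.
  rewrite (Hdg 1%nat 0%nat), (Hdg 2%nat 0%nat), (Hdg 3%nat 0%nat), (Hdg 2%nat 1%nat),
    (Hdg 3%nat 1%nat), (Hdg 3%nat 2%nat) by lia.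
  field.
Qed.

Section Metric.
Variables (U : Pt -> Prop) (g gi : nat -> nat -> Pt -> R).
Hypothesis U_open : open4 U.
Hypothesis g_smooth : forall i j, (i < 4)%nat -> (j < 4)%nat -> smooth_on U (g i j).
Hypothesis gi_smooth : forall i j, (i < 4)%nat -> (j < 4)%nat -> smooth_on U (gi i j).

Lemma smooth_on_Gam k i j : (k < 4)%nat -> (i < 4)%nat -> (j < 4)%nat ->
  smooth_on U (Gam g gi k i j).
Proof. intros. unfold Gam. solve_smooth. Qed.

Lemma smooth_on_Riem i j k l : (i < 4)%nat -> (j < 4)%nat -> (k < 4)%nat -> (l < 4)%nat ->
  smooth_on U (Riem g gi i j k l).
Proof.
  pose proof smooth_on_Gam. intros. unfold Riem, Rup. solve_smooth.
Qed.

Lemma smooth_on_Ric j k : (j < 4)%nat -> (k < 4)%nat -> smooth_on U (Ric g gi j k).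
Proof. pose proof smooth_on_Riem. intros. unfold Ric. solve_smooth. Qed.

Lemma smooth_on_Wstar i j k l : (i < 4)%nat -> (j < 4)%nat -> (k < 4)%nat -> (l < 4)%nat ->
  smooth_on U (Wstar g gi i j k l).
Proof.
  pose proof smooth_on_Riem. pose proof smooth_on_Ric. intros. unfold Wstar. solve_smooth.
Qed.

Definition contract14 (W : nat -> nat -> nat -> nat -> Pt -> R) (j k : nat) (x : Pt) : R :=
  sum4 (fun i => sum4 (fun l => gi i l x * W i j k l x)).

Lemma smooth_on_contract14_Wstar j k : (j < 4)%nat -> (k < 4)%nat ->
  smooth_on U (contract14 (Wstar g gi) j k).
Proof. pose proof smooth_on_Wstar. intros. unfold contract14. solve_smooth. Qed.

Hypothesis g_sym : forall i j x, (i < 4)%nat -> (j < 4)%nat -> U x -> g i j x = g j i x.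
Hypothesis g_gi : forall i k x, (i < 4)%nat -> (k < 4)%nat -> U x ->
  sum4 (fun j => g i j x * gi j k x) = if Nat.eqb i k then 1 else 0.

Lemma gi_sym i j x : (i < 4)%nat -> (j < 4)%nat -> U x -> gi i j x = gi j i x.
Proof.
  intros Hi Hj Hx.
  apply (inverse_of_sym_sym (fun a b => g a b x) (fun a b => gi a b x)); auto.
Qed.

Lemma gi_g i k x : (i < 4)%nat -> (k < 4)%nat -> U x ->
  sum4 (fun j => gi i j x * g j k x) = if Nat.eqb i k then 1 else 0.
Proof.
  intros Hi Hk Hx. rewrite Nat.eqb_sym, <- (g_gi k i x) by auto.
  apply sum4_ext; intros j Hj. rewrite gi_sym, g_sym by auto. ring.
Qed.

Lemma contract14_Wstar j k x : (j < 4)%nat -> (k < 4)%nat -> U x ->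
  contract14 (Wstar g gi) j k x = 4 / 3 * Ric g gi j k x - / 3 * g j k x * Rscal g gi x.
Proof.
  intros Hj Hk Hx. unfold contract14, Wstar.
  transitivity (sum4 (fun i => sum4 (fun l => gi i l x * Riem g gi i j k l x))
     - / 3 * (g j k x * Rscal g gi x
              - sum4 (fun i => Ric g gi i k x * sum4 (fun l => gi i l x * g l j x)))).
  { unfold Rscal, sum4. rewrite !(g_sym j) by (lia || assumption). ring. }
  change (sum4 (fun i => sum4 (fun l => gi i l x * Riem g gi i j k l x)))
    with (Ric g gi j k x).
  rewrite (sum4_ext _ (fun i => Ric g gi i k x * (if Nat.eqb i j then 1 else 0)))
    by (intros; rewrite gi_g; auto).
  rewrite sum4_delta by auto. field.
Qed.

Lemma pd_g_gi m i l x : (m < 4)%nat -> (i < 4)%nat -> (l < 4)%nat -> U x ->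
  sum4 (fun j => g i j x * pd (gi j l) m x) = - sum4 (fun j => pd (g i j) m x * gi j l x).
Proof.
  intros Hm Hi Hl Hx.
  assert (Hconst : pd (fun y => sum4 (fun j => g i j y * gi j l y)) m x = 0).
  { rewrite (pd_local U U_open _ (fun _ => if Nat.eqb i l then 1 else 0)); auto.
    - apply pd_const.
    - intros y Hy; apply g_gi; auto. }
  rewrite pd_sum4 in Hconst.
  2: { intros a Ha. apply has_pd_mult; apply (smooth_on_has_pd U); auto. }
  rewrite (sum4_ext _ (fun j => pd (g i j) m x * gi j l x + g i j x * pd (gi j l) m x))
    in Hconst by (intros; apply pd_mult; apply (smooth_on_has_pd U); auto).
  unfold sum4 in Hconst |- *. lra.
Qed.

(* Metric compatibility of the Levi-Civita connection, for the inverse metric. *)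
Lemma pd_gi m i l x : (m < 4)%nat -> (i < 4)%nat -> (l < 4)%nat -> U x ->
  pd (gi i l) m x
  = - sum4 (fun a => Gam g gi i m a x * gi a l x + Gam g gi l m a x * gi i a x).
Proof.
  intros Hm Hi Hl Hx. unfold Gam.
  rewrite (christoffel_inverse_metric (fun a b => gi a b x) (fun a b => pd (g a b) m x)
             (fun a b => pd (g m b) a x)); auto.
  2: { intros; apply gi_sym; auto. }
  2: { intros a b Ha Hb. apply (pd_local U U_open); auto. intros y Hy; apply g_sym; auto. }
  transitivity (sum4 (fun a => pd (gi a l) m x * (if Nat.eqb a i then 1 else 0))).
  { symmetry. apply (sum4_delta (fun a => pd (gi a l) m x)); auto. }
  transitivity (sum4 (fun b => gi i b x * sum4 (fun a => g b a x * pd (gi a l) m x))).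
  { rewrite (sum4_ext _ (fun a => pd (gi a l) m x * sum4 (fun b => gi i b x * g b a x)))
      by (intros; rewrite gi_g, Nat.eqb_sym; auto).
    unfold sum4; ring. }
  rewrite (sum4_ext _ (fun b => gi i b x * - sum4 (fun a => pd (g b a) m x * gi a l x)))
    by (intros; rewrite pd_g_gi; auto).
  unfold sum4; ring.
Qed.

Lemma cov2_contract14 (W : nat -> nat -> nat -> nat -> Pt -> R) m j k x :
  (m < 4)%nat -> (j < 4)%nat -> (k < 4)%nat -> U x ->
  (forall i j k l, (i < 4)%nat -> (j < 4)%nat -> (k < 4)%nat -> (l < 4)%nat ->
     has_pd (W i j k l) m x) ->
  cov2 g gi (contract14 W) m j k x
  = sum4 (fun i => sum4 (fun l => gi i l x * cov4 g gi W m i j k l x)).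
Proof.
  intros Hm Hj Hk Hx HW.
  assert (Hgi : forall i l, (i < 4)%nat -> (l < 4)%nat -> has_pd (gi i l) m x)
    by (intros; apply (smooth_on_has_pd U); auto).
  assert (Hpd : pd (contract14 W j k) m x = sum4 (fun i => sum4 (fun l =>
     pd (gi i l) m x * W i j k l x + gi i l x * pd (W i j k l) m x))).
  { unfold contract14.
    rewrite (pd_sum4 (fun i y => sum4 (fun l => gi i l y * W i j k l y)));
      [apply sum4_ext; intros i Hi | intros i Hi].
    - rewrite (pd_sum4 (fun l y => gi i l y * W i j k l y));
        [apply sum4_ext; intros l Hl; apply pd_mult | intros l Hl; apply has_pd_mult];
        auto.
    - apply has_pd_sum4; intros l Hl; apply has_pd_mult; auto. }
  unfold cov2 at 1. rewrite Hpd.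
  rewrite (sum4_ext _ (fun i => sum4 (fun l =>
     (- sum4 (fun a => Gam g gi i m a x * gi a l x + Gam g gi l m a x * gi i a x))
       * W i j k l x + gi i l x * pd (W i j k l) m x))).
  2: { intros i Hi. apply sum4_ext; intros l Hl. rewrite pd_gi; auto. }
  unfold contract14, cov4, sum4. ring.
Qed.

Lemma cov2_scal (T C : nat -> nat -> Pt -> R) c m j k x :
  (m < 4)%nat -> (j < 4)%nat -> (k < 4)%nat -> U x ->
  (forall p q y, (p < 4)%nat -> (q < 4)%nat -> U y -> T p q y = c * C p q y) ->
  has_pd (C j k) m x ->
  cov2 g gi T m j k x = c * cov2 g gi C m j k x.
Proof.
  intros Hm Hj Hk Hx HTC HC. unfold cov2.
  rewrite (pd_local U U_open (T j k) (fun y => c * C j k y)), pd_scal; auto.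
  - unfold sum4. rewrite !HTC by (lia || assumption). ring.
  - intros y Hy. apply HTC; auto.
Qed.

End Metric.

Theorem mainTheorem10
  (U : Pt -> Prop) (g gi T : nat -> nat -> Pt -> R) (kappa : R) :
  open4 U ->
  (forall i j, (i < 4)%nat -> (j < 4)%nat -> smooth_on U (g i j)) ->
  (forall i j, (i < 4)%nat -> (j < 4)%nat -> smooth_on U (gi i j)) ->
  (forall i j x, (i < 4)%nat -> (j < 4)%nat -> U x -> g i j x = g j i x) ->
  (forall i k x, (i < 4)%nat -> (k < 4)%nat -> U x ->
     sum4 (fun j => g i j x * gi j k x) = (if Nat.eqb i k then 1 else 0)) ->
  lorentzian_on U g ->
  (forall m i j k l x, (m < 4)%nat -> (i < 4)%nat -> (j < 4)%nat ->
     (k < 4)%nat -> (l < 4)%nat -> U x ->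
     cov4 g gi (Wstar g gi) m i j k l x = 0) ->
  kappa <> 0 ->
  (forall i j x, (i < 4)%nat -> (j < 4)%nat -> U x ->
     Ric g gi i j x = kappa * T i j x) ->
  (forall i j x, (i < 4)%nat -> (j < 4)%nat -> U x -> T i j x = T j i x) ->
  (forall x, U x -> sum4 (fun i => sum4 (fun j => gi i j x * T i j x)) = 0) ->
  forall m j k x, (m < 4)%nat -> (j < 4)%nat -> (k < 4)%nat -> U x ->
    cov2 g gi T m j k x = 0.
Proof.
  intros HU Hg Hgi Hgs Hinv _ HW Hkappa HRic _ Htrace m j k x Hm Hj Hk Hx.
  assert (Hscal : forall y, U y -> Rscal g gi y = 0).
  { intros y Hy. transitivity (kappa * sum4 (fun i => sum4 (fun j => gi i j y * T i j y))).
    - unfold Rscal, sum4. rewrite !HRic by (lia || assumption). ring.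
    - rewrite Htrace; auto; ring. }
  assert (HT : forall p q y, (p < 4)%nat -> (q < 4)%nat -> U y ->
            T p q y = / (4 / 3 * kappa) * contract14 gi (Wstar g gi) p q y).
  { intros p q y Hp Hq Hy.
    rewrite (contract14_Wstar U g gi), Hscal, HRic by auto. field; auto. }
  rewrite (cov2_scal U g gi HU _ _ _ m j k x Hm Hj Hk Hx HT).
  2: { apply (smooth_on_has_pd U); auto. apply smooth_on_contract14_Wstar; auto. }
  rewrite (cov2_contract14 U g gi HU Hg Hgi Hgs Hinv); auto.
  2: { intros; apply (smooth_on_has_pd U); auto. apply smooth_on_Wstar; auto. }
  unfold sum4. rewrite !HW by (lia || assumption). ring.
Qed.
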